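(* Let \[ P(z,\bar z)=\sum_{k=0}^n\sum_{j=0}^k\alpha_{j,k-j}z^j\bar z^{\,k-j} \] be a polyanalytic polynomial of degree $n$ such that there exists $\ell\in\{0,1,\ldots,n\}$ with \[ \alpha_n := |\alpha_{\ell,n-\ell}|-\sum_{j=0,\,j\neq\ell}^n|\alpha_{j,n-j}|>0. \] Define the real polynomial \[ q(t)=t^n-\sum_{k=0}^{n-1}c_kt^k,\qquad c_k=\sum_{j=0}^k\frac{|\alpha_{j,k-j}|}{\alpha_n},\quad k=0,1,\ldots,n-1. \] If not all $c_k$ are zero, then $q$ has a unique positive zero $r_0>0$; otherwise set $r_0=0$. Then: (i) every zero $z$ of $P$ satisfies $|z|\leq r_0$; (ii) $r_0\leq r_1:=\max\Bigl\{1,\sum_{k=0}^{n-1}\sum_{j=0}^k\frac{|\alpha_{j,k-j}|}{\alpha_n}\Bigr\}$ and $r_0\leq r_2:=1+\max\Bigl\{\sum_{j=0}^k\frac{|\alpha_{j,k-j}|}{\alpha_n}:k=0,1,\ldots,n-1\Bigr\}$.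
   Context: A polyanalytic polynomial is a function $\mathbb{C}\to\mathbb{C}$ of the form given, with complex coefficients $\alpha_{j,k-j}$; its degree is the largest $k$ such that some $\alpha_{j,k-j}\neq 0$. A zero of $P$ is a point $z\in\mathbb{C}$ with $P(z,\bar z)=0$. *)

From HB Require Import structures.
From mathcomp Require Import all_boot all_order all_algebra.
From mathcomp Require Import complex.
Set Implicit Arguments. Unset Strict Implicit. Unset Printing Implicit Defensive.
Import Order.TTheory GRing.Theory Num.Theory.
Local Open Scope ring_scope.

Definition cabs (R : rcfType) (z : R[i]) : R := Normc.normc z.

Definition polyan (R : rcfType) (alpha : nat -> nat -> R[i]) (n : nat) (z : R[i]) : R[i] :=
  \sum_(k < n.+1) \sum_(j < k.+1)
     alpha j (k - j)%N * z ^+ j * (conjc z) ^+ (k - j)%N.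

Definition alpha_top (R : rcfType) (alpha : nat -> nat -> R[i]) (n l : nat) : R :=
  cabs (alpha l (n - l)%N) - \sum_(j < n.+1 | (j : nat) != l) cabs (alpha j (n - j)%N).

Definition ccoef (R : rcfType) (alpha : nat -> nat -> R[i]) (n l k : nat) : R :=
  \sum_(j < k.+1) cabs (alpha j (k - j)%N) / alpha_top alpha n l.

Definition q_of_P (R : rcfType) (alpha : nat -> nat -> R[i]) (n l : nat) : {poly R} :=
  'X^n - \sum_(k < n) (ccoef alpha n l k)%:P * 'X^k.

(** The homogeneous part of [P] of degree [k < n] has modulus at most
    [alpha_n c_k |z|^k], while the part of degree [n] has modulus at least
    [alpha_n |z|^n]; hence every zero [z] of [P] satisfies [q(|z|) <= 0].
    As the [c_k] are nonnegative, [q(t) / t^n = 1 - sum_k c_k t^(k-n)] is strictly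
    increasing for [t > 0], so [q] has at most one positive zero, beyond which it is
    positive.  It is negative near [0] as soon as some [c_k] is nonzero, and
    nonnegative at [r_1] and at [r_2] (the latter by a geometric sum); the
    intermediate value theorem then gives [r_0], and monotonicity the bounds. *)

From HB Require Import structures.
From mathcomp Require Import all_boot all_order all_algebra.
From mathcomp Require Import complex.
Import Order.TTheory GRing.Theory Num.Theory.
Local Open Scope ring_scope.

Set Implicit Arguments.
Unset Strict Implicit.
Unset Printing Implicit Defensive.

Section ComplexModulus.
Variable R : rcfType.
Implicit Types x y : R[i].

(* [cabs] is the norm of the normed module [Rcomplex R] over [R]. *)
Lemma cabs_ge0 x : 0 <= cabs x.
Proof. exact: (@normr_ge0 R (Rcomplex R)). Qed.

Lemma ler_cabs_sum (I : Type) (r : seq I) (P : pred I) (F : I -> R[i]) :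
  cabs (\sum_(i <- r | P i) F i) <= \sum_(i <- r | P i) cabs (F i).
Proof. exact: (@ler_norm_sum R (Rcomplex R)). Qed.

Lemma lerB_cabsD x y : cabs x - cabs y <= cabs (x + y).
Proof. exact: (@lerB_normD R (Rcomplex R)). Qed.

Lemma cabsX x k : cabs (x ^+ k) = cabs x ^+ k.
Proof.
elim: k => [|k IHk]; first exact: Normc.normc1.
by rewrite !exprS -IHk; exact: Normc.normcM.
Qed.

Lemma cabsJ x : cabs (conjc x) = cabs x.
Proof. by case: x => a b; rewrite /cabs /Normc.normc /= sqrrN. Qed.

End ComplexModulus.

Lemma ler_expr_cross (R : realDomainType) (s t : R) (j m : nat) :
  0 <= s -> s <= t -> (j <= m)%N -> t ^+ j * s ^+ m <= t ^+ m * s ^+ j.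
Proof.
move=> s0 st jm; rewrite -(subnKC jm) !exprD mulrA [in X in _ <= X]mulrAC.
by rewrite ler_wpM2l ?mulr_ge0 ?exprn_ge0 ?lerXn2r ?nnegrE ?(le_trans s0).
Qed.

Section CauchyPolynomial.
Variables (R : realFieldType) (c : nat -> R) (n : nat).
Hypothesis c_ge0 : forall k, 0 <= c k.

Definition cauchy_poly : {poly R} := 'X^n - \sum_(k < n) (c k)%:P * 'X^k.

Local Notation q := cauchy_poly.

Lemma horner_cauchy_poly (t : R) : q.[t] = t ^+ n - \sum_(k < n) c k * t ^+ k.
Proof.
rewrite /q hornerD hornerN hornerXn horner_sum; congr (_ - _).
by apply: eq_bigr => k _; rewrite hornerCM hornerXn.
Qed.

Lemma cauchy_polyXn : (forall k, (k < n)%N -> c k = 0) -> q = 'X^n.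
Proof.
by move=> c0; rewrite /q big1 ?subr0 // => k _; rewrite c0 // mul0r.
Qed.

(* Cross-multiplying by [s^(n-1) t^(n-1)] expresses that [q(t) / t^n] increases. *)
Lemma cauchy_poly_gt0 (s t : R) : 0 < s -> s < t -> 0 <= q.[s] -> 0 < q.[t].
Proof.
rewrite !horner_cauchy_poly subr_ge0 subr_gt0.
case: n => [|m] s0 st qs; first by rewrite big_ord0 expr0 ltr01.
have t0 : 0 < t := lt_trans s0 st.
rewrite -(ltr_pM2r (exprn_gt0 m s0)).
apply: (@le_lt_trans _ _ (t ^+ m * \sum_(k < m.+1) c k * s ^+ k)).
  rewrite mulr_suml mulr_sumr; apply: ler_sum => k _.
  rewrite -mulrA !(mulrCA _ (c k)) ler_wpM2l //.
  by rewrite ler_expr_cross ?ltW // -ltnS.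
apply: (@le_lt_trans _ _ (t ^+ m * s ^+ m.+1)).
  by apply: ler_wpM2l => //; rewrite exprn_ge0 // ltW.
by rewrite !exprS mulrCA -mulrA ltr_pM2r ?mulr_gt0 ?exprn_gt0.
Qed.

Lemma cauchy_root_ge (x t : R) : 0 < x -> q.[x] = 0 -> q.[t] <= 0 -> t <= x.
Proof.
move=> x_gt0 qx qt; rewrite leNgt; apply/negP => /(cauchy_poly_gt0 x_gt0).
by rewrite qx lexx ltNge qt => /(_ isT).
Qed.

Lemma cauchy_root_le (x r : R) : q.[x] = 0 -> 0 < r -> 0 <= q.[r] -> x <= r.
Proof.
move=> qx r_gt0 qr; rewrite leNgt; apply/negP => /(cauchy_poly_gt0 r_gt0)/(_ qr).
by rewrite qx ltxx.
Qed.

Lemma cauchy_poly_max1_sum_ge0 : 0 <= q.[Num.max 1 (\sum_(k < n) c k)].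
Proof.
rewrite horner_cauchy_poly subr_ge0; case: n => [|m]; first by rewrite big_ord0.
set r := Num.max _ _; have r1 : 1 <= r by rewrite le_max lexx.
apply: (@le_trans _ _ ((\sum_(k < m.+1) c k) * r ^+ m)).
  rewrite mulr_suml; apply: ler_sum => k _; rewrite ler_wpM2l //.
  by rewrite ler_weXn2l // -ltnS.
rewrite exprS ler_wpM2r ?exprn_ge0 ?(le_trans ler01 r1) //.
by rewrite le_max lexx orbT.
Qed.

Lemma cauchy_poly_1_add_bigmax_ge0 : 0 <= q.[1 + \big[Num.max/0]_(k < n) c k].
Proof.
set M := \big[_/_]_(k < n) _; have M0 : 0 <= M := bigmax_ge_id _ _ _ _.
have geom k : M * \sum_(i < k) (1 + M) ^+ i = (1 + M) ^+ k - 1.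
  elim: k => [|k IHk]; first by rewrite big_ord0 mulr0 expr0 subrr.
  by rewrite big_ord_recr mulrDr IHk exprS mulrDl mul1r addrAC addrC.
rewrite horner_cauchy_poly subr_ge0.
apply: (@le_trans _ _ (M * \sum_(k < n) (1 + M) ^+ k)); last first.
  by rewrite geom lerBlDr lerDl.
rewrite mulr_sumr; apply: ler_sum => k _.
by rewrite ler_wpM2r ?exprn_ge0 ?addr_ge0 // le_bigmax.
Qed.

(* The witness [e = c_k / (1 + c_k)] satisfies [e <= 1] and [e <= c_k],
   so [e^n <= e^(k+1) <= c_k e^k]. *)
Lemma cauchy_poly_le0_near0 k :
  (k < n)%N -> c k != 0 -> exists2 e, 0 < e & q.[e] <= 0.
Proof.
move=> kn ck; have ck_gt0 : 0 < c k by rewrite lt_def ck c_ge0.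
have d_gt0 : 0 < 1 + c k by rewrite addr_gt0.
set e := c k / (1 + c k); have e_gt0 : 0 < e by rewrite divr_gt0.
have e_le1 : e <= 1 by rewrite ler_pdivrMr // mul1r lerDr ltW.
have e_le_ck : e <= c k by rewrite ler_pdivrMr // ler_peMr ?lerDl ?ltW.
exists e => //; rewrite horner_cauchy_poly subr_le0 (bigD1 (Ordinal kn)) //=.
apply: (@le_trans _ _ (c k * e ^+ k)); last first.
  by rewrite lerDl sumr_ge0 // => i _; rewrite mulr_ge0 ?c_ge0 ?exprn_ge0 ?ltW.
rewrite -(subnKC kn) exprD exprS mulrAC.
apply: ler_wpM2r; first by rewrite exprn_ge0 // ltW.
by rewrite (le_trans _ e_le_ck) // ler_piMr ?exprn_ile1 // ltW.
Qed.

End CauchyPolynomial.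

Lemma cauchy_poly_has_root (R : rcfType) (c : nat -> R) (n k : nat) :
  (forall k, 0 <= c k) -> (k < n)%N -> c k != 0 ->
  exists2 x, 0 < x & (cauchy_poly c n).[x] = 0.
Proof.
move=> c_ge0 kn ck; have [e e_gt0 qe] := cauchy_poly_le0_near0 c_ge0 kn ck.
have qr := cauchy_poly_max1_sum_ge0 n c_ge0; set r := Num.max 1 _ in qr.
have r_gt0 : 0 < r by rewrite lt_max ltr01.
have er : e <= r.
  rewrite leNgt; apply/negP => /(cauchy_poly_gt0 c_ge0 r_gt0)/(_ qr).
  by rewrite ltNge qe.
have [x /andP[ex _] /eqP qx] := poly_ivt er (introT andP (conj qe qr)).
by exists x; first exact: lt_le_trans ex.
Qed.

Definition polyan_hom (R : rcfType) (alpha : nat -> nat -> R[i]) (k : nat) (z : R[i]) :=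
  \sum_(j < k.+1) alpha j (k - j)%N * z ^+ j * conjc z ^+ (k - j)%N.

Section Polyanalytic.
Variables (R : rcfType) (alpha : nat -> nat -> R[i]) (n l : nat).
Implicit Types z : R[i].

Lemma polyanE z : polyan alpha n z = \sum_(k < n.+1) polyan_hom alpha k z.
Proof. by []. Qed.

Lemma cabs_polyan_term z j k : (j <= k)%N ->
  cabs (alpha j (k - j)%N * z ^+ j * conjc z ^+ (k - j)%N)
  = cabs (alpha j (k - j)%N) * cabs z ^+ k.
Proof.
move=> jk; rewrite /cabs !Normc.normcM -!/(cabs _) !cabsX cabsJ.
by rewrite -mulrA -exprD subnKC.
Qed.

Lemma cabs_polyan_hom_le k z :
  cabs (polyan_hom alpha k z)
  <= (\sum_(j < k.+1) cabs (alpha j (k - j)%N)) * cabs z ^+ k.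
Proof.
apply: le_trans (ler_cabs_sum _ _ _) _; rewrite mulr_suml.
by apply: ler_sum => j _; rewrite cabs_polyan_term // -ltnS.
Qed.

Hypothesis l_le_n : (l <= n)%N.

Lemma cabs_polyan_hom_top_ge z :
  alpha_top alpha n l * cabs z ^+ n <= cabs (polyan_hom alpha n z).
Proof.
pose l' : 'I_n.+1 := Ordinal (l_le_n : (l < n.+1)%N).
rewrite /polyan_hom (bigD1 l') //=; apply: le_trans (lerB_cabsD _ _).
rewrite /alpha_top mulrBl cabs_polyan_term // lerB // mulr_suml.
apply: le_trans (ler_cabs_sum _ _ _) _.
rewrite (eq_bigl (fun j : 'I_n.+1 => j != l')) => [|j]; last by rewrite -val_eqE.
by apply: ler_sum => j _; rewrite cabs_polyan_term // -ltnS.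
Qed.

Hypothesis alpha_top_gt0 : 0 < alpha_top alpha n l.

Lemma ccoef_ge0 k : 0 <= ccoef alpha n l k.
Proof. by apply: sumr_ge0 => j _; rewrite divr_ge0 ?cabs_ge0 ?ltW. Qed.

Lemma alpha_top_mul_ccoef k :
  alpha_top alpha n l * ccoef alpha n l k = \sum_(j < k.+1) cabs (alpha j (k - j)%N).
Proof.
rewrite /ccoef mulr_sumr; apply: eq_bigr => j _.
by rewrite mulrCA divff ?mulr1 ?gt_eqF.
Qed.

Lemma q_of_P_cauchy : q_of_P alpha n l = cauchy_poly (ccoef alpha n l) n.
Proof. by []. Qed.

Lemma polyan_eq0_q_le0 z : polyan alpha n z = 0 -> (q_of_P alpha n l).[cabs z] <= 0.
Proof.
rewrite polyanE big_ord_recr /= addrC => /(congr1 (@cabs R)) hz.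
have := lerB_cabsD (polyan_hom alpha n z) (\sum_(k < n) polyan_hom alpha k z).
rewrite hz [cabs 0]Normc.normc0 subr_le0 => top_le_low.
rewrite -(pmulr_rle0 _ alpha_top_gt0) horner_cauchy_poly mulrBr subr_le0.
apply: le_trans (cabs_polyan_hom_top_ge z) (le_trans top_le_low _).
apply: le_trans (ler_cabs_sum _ _ _) _; rewrite mulr_sumr.
by apply: ler_sum => k _; rewrite mulrA alpha_top_mul_ccoef cabs_polyan_hom_le.
Qed.

End Polyanalytic.

Unset Implicit Arguments.
Set Strict Implicit.

Theorem theorem3p1 (R : rcfType) (alpha : nat -> nat -> R[i]) (n l : nat) :
  (* P has degree n *)
  (exists j : nat, (j <= n)%N /\ alpha j (n - j)%N != 0) ->
  (l <= n)%N ->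
  0 < alpha_top alpha n l ->
  exists r0 : R,
    ((forall k : nat, (k < n)%N -> ccoef alpha n l k = 0) -> r0 = 0) /\
    ((exists k : nat, (k < n)%N /\ ccoef alpha n l k != 0) ->
       0 < r0 /\ (q_of_P alpha n l).[r0] = 0 /\
       (forall t : R, 0 < t -> (q_of_P alpha n l).[t] = 0 -> t = r0)) /\
    (forall z : R[i], polyan alpha n z = 0 -> cabs z <= r0) /\
    r0 <= Num.max 1 (\sum_(k < n) ccoef alpha n l k) /\
    r0 <= 1 + \big[Num.max/0]_(k < n) ccoef alpha n l k.
Proof.
(* The degree hypothesis is implied by [0 < alpha_top alpha n l]. *)
move=> _ l_le_n a_gt0; have c_ge0 := ccoef_ge0 a_gt0.
have zero_bound := polyan_eq0_q_le0 l_le_n a_gt0; rewrite q_of_P_cauchy in zero_bound *.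
have r1_gt0 : 0 < Num.max 1 (\sum_(k < n) ccoef alpha n l k) by rewrite lt_max ltr01.
have r2_gt0 : 0 < 1 + \big[Num.max/0]_(k < n) ccoef alpha n l k.
  by rewrite ltr_wpDr ?bigmax_ge_id.
have [/existsP[k ck] | /existsPn c0] := boolP [exists k : 'I_n, ccoef alpha n l k != 0].
  have [x x_gt0 qx] := cauchy_poly_has_root c_ge0 (ltn_ord k) ck.
  exists x; split; first by move=> c0; rewrite c0 ?eqxx in ck.
  split.
    move=> _; split=> //; split=> // t t_gt0 qt; apply/le_anti.
    by rewrite (cauchy_root_ge c_ge0 x_gt0 qx) ?qt // (cauchy_root_le c_ge0 qx t_gt0) ?qt.
  split=> [z /zero_bound|]; first exact: (cauchy_root_ge c_ge0 x_gt0 qx).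
  by rewrite !(cauchy_root_le c_ge0 qx) ?cauchy_poly_max1_sum_ge0
    ?cauchy_poly_1_add_bigmax_ge0.
have c_eq0 k : (k < n)%N -> ccoef alpha n l k = 0.
  by move=> kn; apply/eqP/negPn; exact: c0 (Ordinal kn).
exists 0; split=> //; split=> [[k [kn]]|]; first by rewrite c_eq0 ?eqxx.
split; last by rewrite !ltW.
move=> z /zero_bound; rewrite cauchy_polyXn // hornerXn => zn.
by rewrite leNgt; apply/negP => /(exprn_gt0 n); rewrite ltNge zn.
Qed.
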